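(* Let $G$ and $H$ be finitely generated groups acting transitively on sets $X$ and $Y$ respectively. If $\mathrm{Con}(G\curvearrowright X)=\mathrm{Con}(H\curvearrowright Y)$, then $|X|=|Y|$.
   Context: For an action $G\curvearrowright X$, an ordered tuple $\mathfrak{g}=(g_1,\dots,g_n)$ of elements of $G$ and a finite partition $\mathcal{E}=\{E_1,\dots,E_m\}$ of $X$ (a configuration pair), a configuration is a tuple $C=(C_0,\dots,C_n)\in\{1,\dots,m\}^{n+1}$ such that some $x\in E_{C_0}$ satisfies $g_i\cdot x\in E_{C_i}$ for $i=1,\dots,n$; the set of these is $\mathrm{Con}(\mathfrak{g},\mathcal{E};X)$. Then $\mathrm{Con}(G\curvearrowright X)=\{\mathrm{Con}(\mathfrak{g},\mathcal{E};X): (\mathfrak{g},\mathcal{E})\text{ a configuration pair}\}$. *)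

From Stdlib Require Import List Arith.
Import ListNotations.

Record Group := {
  carrier :> Type;
  gmul : carrier -> carrier -> carrier;
  ginv : carrier -> carrier;
  gone : carrier;
  gmulA : forall a b c, gmul a (gmul b c) = gmul (gmul a b) c;
  gmul1l : forall a, gmul gone a = a;
  gmulVl : forall a, gmul (ginv a) a = gone
}.

Inductive generated (G : Group) (S : list G) : G -> Prop :=
| gen_one : generated G S (gone G)
| gen_in : forall s, In s S -> generated G S s
| gen_mul : forall a b, generated G S a -> generated G S b -> generated G S (gmul G a b)
| gen_inv : forall a, generated G S a -> generated G S (ginv G a).

Definition finitely_generated (G : Group) : Prop :=
  exists S : list G, forall g : G, generated G S g.

Definition is_action (G : Group) (X : Type) (act : G -> X -> X) : Prop :=
  (forall x, act (gone G) x = x) /\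
  (forall g h x, act (gmul G g h) x = act g (act h x)).

Definition transitive (G : Group) (X : Type) (act : G -> X -> X) : Prop :=
  forall x y : X, exists g : G, act g x = y.

(* A finite partition {E_1,...,E_m} of X, encoded by the labelling
   E : X -> nat with E_k = {x | E x = k}; blocks are nonempty. *)
Definition is_partition (X : Type) (m : nat) (E : X -> nat) : Prop :=
  (forall x, 1 <= E x <= m) /\ (forall k, 1 <= k <= m -> exists x, E x = k).

Definition Con (G : Group) (X : Type) (act : G -> X -> X)
  (gs : list G) (E : X -> nat) : list nat -> Prop :=
  fun C => exists x : X, C = E x :: map (fun g => E (act g x)) gs.

Definition ConAct (G : Group) (X : Type) (act : G -> X -> X)
  : (list nat -> Prop) -> Prop :=
  fun S => exists (gs : list G) (m : nat) (E : X -> nat),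
    gs <> [] /\ is_partition X m E /\ (forall C, S C <-> Con G X act gs E C).

Definition ConAct_eq (G H : Group) (X Y : Type)
  (actG : G -> X -> X) (actH : H -> Y -> Y) : Prop :=
  forall S : list nat -> Prop,
    ConAct G X actG S <-> ConAct H Y actH S.

Definition same_card (X Y : Type) : Prop :=
  exists (f : X -> Y) (g : Y -> X),
    (forall x, g (f x) = x) /\ (forall y, f (g y) = y).

(* A finitely generated group is countable, hence so is a transitive G-set X,
   and X carries an injective ranking r : X -> nat whose range is an initial
   segment of nat.  X can be partitioned into k+1 nonempty blocks iff k is a
   rank (pigeonhole).  The labels of a partition E are the first coordinates
   of the configurations in Con([1], E), so Con(G ↷ X) = Con(H ↷ Y) forces X
   and Y to admit partitions of the same sizes; their rankings then have the
   same range, and matching ranks is a bijection. *)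
From Stdlib Require Import List Arith Lia Cantor FinFun Classical ClassicalEpsilon.
Import ListNotations.

Section Enumeration.
Variable G : Group.
Variable gens : list G.

(* [level_elem n k]: the value of the term of depth at most [n] coded by [k],
   the children of a node being coded by Cantor pairing. *)
Fixpoint level_elem (n k : nat) : G :=
  match n with
  | 0 => match k with 0 => gone G | S i => nth i gens (gone G) end
  | S n' =>
      match of_nat k with
      | (0, r) => level_elem n' r
      | (1, r) => let (a, b) := of_nat r in gmul G (level_elem n' a) (level_elem n' b)
      | (_, r) => ginv G (level_elem n' r)
      end
  end.

Lemma level_elem_lift d n k : exists k', level_elem (d + n) k' = level_elem n k.
Proof.
  induction d as [|d [k' Hk']]; simpl.
  - exists k; reflexivity.
  - exists (to_nat (0, k')). rewrite cancel_of_to. exact Hk'.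
Qed.

Lemma generated_level_elem g : generated G gens g -> exists n k, level_elem n k = g.
Proof.
  induction 1 as [| s Hs | a b _ [n1 [k1 H1]] _ [n2 [k2 H2]] | a _ [n [k Hk]]].
  - exists 0, 0; reflexivity.
  - destruct (In_nth _ _ (gone G) Hs) as [i [_ Hi]]. exists 0, (S i); exact Hi.
  - destruct (level_elem_lift n2 n1 k1) as [a' Ha].
    destruct (level_elem_lift n1 n2 k2) as [b' Hb]. rewrite Nat.add_comm in Hb.
    exists (S (n2 + n1)), (to_nat (1, to_nat (a', b'))).
    cbn [level_elem]. rewrite !cancel_of_to. congruence.
  - exists (S n), (to_nat (2, k)).
    cbn [level_elem]. rewrite cancel_of_to. congruence.
Qed.

Lemma generated_enumerable :
  exists e : nat -> G, forall g, generated G gens g -> exists k, e k = g.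
Proof.
  exists (fun k => let (n, j) := of_nat k in level_elem n j).
  intros g Hg. destruct (generated_level_elem g Hg) as [n [j Hj]].
  exists (to_nat (n, j)). rewrite cancel_of_to. exact Hj.
Qed.
End Enumeration.

Lemma injection_of_surjection (X : Type) (f : nat -> X) :
  (forall x, exists n, f n = x) -> exists i : X -> nat, Injective i.
Proof.
  intro Hf.
  exists (fun x => proj1_sig (constructive_indefinite_description _ (Hf x))).
  intros x y Exy.
  destruct (constructive_indefinite_description _ (Hf x)) as [n Hn].
  destruct (constructive_indefinite_description _ (Hf y)) as [m Hm].
  simpl in Exy. congruence.
Qed.

Lemma transitive_set_countable (G : Group) (X : Type) (act : G -> X -> X) :
  finitely_generated G -> transitive G X act -> exists i : X -> nat, Injective i.
Proof.
  intros [gens Hgens] Htr.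
  destruct (classic (inhabited X)) as [[x0]|HX].
  - destruct (generated_enumerable G gens) as [e He].
    apply (injection_of_surjection X (fun k => act (e k) x0)). intro y.
    destruct (Htr x0 y) as [g Hg]. destruct (He g (Hgens g)) as [k Hk].
    exists k. congruence.
  - exists (fun _ => 0). intros x. exfalso. exact (HX (inhabits x)).
Qed.

Section CountBelow.
Variable P : nat -> Prop.

Fixpoint count_below (n : nat) : nat :=
  match n with
  | 0 => 0
  | S n' => count_below n' + (if excluded_middle_informative (P n') then 1 else 0)
  end.

Lemma count_below_mono a b : a <= b -> count_below a <= count_below b.
Proof. induction 1; simpl; lia. Qed.

Lemma count_below_lt a b : P a -> a < b -> count_below a < count_below b.
Proof.
  intros Pa Hab. pose proof (count_below_mono (S a) b Hab) as Hle. simpl in Hle.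
  destruct excluded_middle_informative; [lia | contradiction].
Qed.

Lemma count_below_attained N k :
  k < count_below N -> exists n, n < N /\ P n /\ count_below n = k.
Proof.
  induction N as [|N IH]; simpl; intro Hk; [lia|].
  destruct (Nat.lt_ge_cases k (count_below N)) as [Hlt|Hge].
  - destruct (IH Hlt) as [n [? [? ?]]]. exists n; repeat split; auto.
  - destruct excluded_middle_informative as [PN|]; [|lia].
    exists N; repeat split; auto; lia.
Qed.
End CountBelow.

Definition downward_closed_range {X : Type} (r : X -> nat) : Prop :=
  forall x k, k <= r x -> exists y, r y = k.

(* Rank [x] by the number of values of [i] below [i x]. *)
Lemma ranking_of_injection (X : Type) (i : X -> nat) :
  Injective i -> exists r : X -> nat, Injective r /\ downward_closed_range r.
Proof.
  intro Hi. set (P n := exists x, i x = n).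
  exists (fun x => count_below P (i x)). split.
  - intros x y Exy.
    destruct (lt_eq_lt_dec (i x) (i y)) as [[Hlt|Heq]|Hlt]; auto.
    + pose proof (count_below_lt P _ _ (ex_intro _ x eq_refl) Hlt). lia.
    + pose proof (count_below_lt P _ _ (ex_intro _ y eq_refl) Hlt). lia.
  - intros x k Hk. apply Nat.lt_eq_cases in Hk as [Hk|Hk]; [|eauto].
    destruct (count_below_attained P _ _ Hk) as [n [_ [[y Hy] Hn]]].
    exists y. congruence.
Qed.

Lemma partition_representatives (X : Type) (m : nat) (E : X -> nat) :
  is_partition X m E -> exists l : list X, map E l = seq 1 m.
Proof.
  intros [_ Hblocks].
  assert (Hn : forall n, n <= m -> exists l : list X, map E l = seq 1 n).
  { induction n as [|n IH]; intro Hn.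
    - exists []; reflexivity.
    - destruct IH as [l Hl]; [lia|]. destruct (Hblocks (S n)) as [x Hx]; [lia|].
      exists (l ++ [x]). rewrite map_app, Hl, seq_S. simpl. congruence. }
  exact (Hn m (le_n m)).
Qed.

Lemma partition_size_le_rank (X : Type) (r : X -> nat) (k : nat) (E : X -> nat) :
  Injective r -> is_partition X (S k) E -> exists x, k <= r x.
Proof.
  intros Hr HE. apply NNPP. intro Hno.
  assert (Hlt : forall x, r x < k).
  { intro x. apply Nat.nle_gt. intro Hle. apply Hno. eauto. }
  destruct (partition_representatives X (S k) E HE) as [l Hl].
  assert (Hlen : length l = S k) by (rewrite <- (length_map E), Hl, length_seq; auto).
  assert (Hnodup : NoDup (map r l)).
  { apply Injective_map_NoDup; auto. apply (NoDup_map_inv E). rewrite Hl. apply seq_NoDup. }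
  assert (Hincl : incl (map r l) (seq 0 k)).
  { intros a Ha. apply in_map_iff in Ha as [x [<- _]]. apply in_seq. specialize (Hlt x). lia. }
  pose proof (NoDup_incl_length Hnodup Hincl) as Hle.
  rewrite length_map, length_seq in Hle. lia.
Qed.

Lemma rank_iff_partition (X : Type) (r : X -> nat) :
  Injective r -> downward_closed_range r ->
  forall k, (exists x, r x = k) <-> exists E, is_partition X (S k) E.
Proof.
  intros Hr Hdc k. split.
  - intros [x0 Hx0]. exists (fun x => S (Nat.min (r x) k)). split.
    + intro x; lia.
    + intros j Hj. destruct (Hdc x0 (j - 1)) as [y Hy]; [lia|].
      exists y. rewrite Hy. lia.
  - intros [E HE]. destruct (partition_size_le_rank X r k E Hr HE) as [x Hx].
    exact (Hdc x k Hx).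
Qed.

Lemma Con_first_coordinate (G : Group) (X : Type) (act : G -> X -> X)
  (gs : list G) (E : X -> nat) (j : nat) :
  (exists C, Con G X act gs E (j :: C)) <-> exists x, E x = j.
Proof.
  split.
  - intros [C [x Hx]]. injection Hx as Hj _. eauto.
  - intros [x <-]. exists (map (fun g => E (act g x)) gs), x. reflexivity.
Qed.

Lemma is_partition_same_labels (X Y : Type) (m : nat) (E : X -> nat) (E' : Y -> nat) :
  (forall j, (exists x, E x = j) <-> (exists y, E' y = j)) ->
  is_partition X m E -> is_partition Y m E'.
Proof.
  intros Hlab [Hbound Hblocks]. split.
  - intro y. destruct (proj2 (Hlab (E' y)) (ex_intro _ y eq_refl)) as [x Hx].
    rewrite <- Hx. apply Hbound.
  - intros j Hj. apply Hlab, Hblocks, Hj.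
Qed.

Lemma partition_transfer (G H : Group) (X Y : Type)
  (actG : G -> X -> X) (actH : H -> Y -> Y) (m : nat) :
  (forall S, ConAct G X actG S -> ConAct H Y actH S) ->
  (exists E, is_partition X m E) -> exists E', is_partition Y m E'.
Proof.
  intros HC [E HE].
  destruct (HC (Con G X actG [gone G] E)) as [gs [m' [E' [_ [_ Hiff]]]]].
  { exists [gone G], m, E. split; [discriminate | split; [exact HE | tauto]]. }
  exists E'. apply (is_partition_same_labels X Y m E); auto.
  intro j. rewrite <- (Con_first_coordinate G X actG [gone G] E j),
                  <- (Con_first_coordinate H Y actH gs E' j).
  split; intros [C HCj]; exists C; apply Hiff; exact HCj.
Qed.

Lemma same_card_of_same_range (X Y : Type) (rX : X -> nat) (rY : Y -> nat) :
  Injective rX -> Injective rY ->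
  (forall k, (exists x, rX x = k) <-> (exists y, rY y = k)) ->
  same_card X Y.
Proof.
  intros HX HY Hrange.
  assert (F : forall x, exists y, rY y = rX x) by (intro x; apply Hrange; eauto).
  assert (B : forall y, exists x, rX x = rY y) by (intro y; apply Hrange; eauto).
  exists (fun x => proj1_sig (constructive_indefinite_description _ (F x))),
         (fun y => proj1_sig (constructive_indefinite_description _ (B y))).
  split.
  - intro x. destruct (constructive_indefinite_description _ (F x)) as [y Hy]; simpl.
    destruct (constructive_indefinite_description _ (B y)) as [x' Hx']; simpl.
    apply HX. congruence.
  - intro y. destruct (constructive_indefinite_description _ (B y)) as [x Hx]; simpl.
    destruct (constructive_indefinite_description _ (F x)) as [y' Hy']; simpl.
    apply HY. congruence.
Qed.

Theorem mainTheorem3 (G H : Group) (X Y : Type)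
  (actG : G -> X -> X) (actH : H -> Y -> Y) :
  finitely_generated G -> finitely_generated H ->
  is_action G X actG -> is_action H Y actH ->
  transitive G X actG -> transitive H Y actH ->
  ConAct_eq G H X Y actG actH ->
  same_card X Y.
Proof.
  intros fgG fgH _ _ trG trH Heq.
  destruct (transitive_set_countable G X actG fgG trG) as [iX HiX].
  destruct (transitive_set_countable H Y actH fgH trH) as [iY HiY].
  destruct (ranking_of_injection X iX HiX) as [rX [HrX dcX]].
  destruct (ranking_of_injection Y iY HiY) as [rY [HrY dcY]].
  apply (same_card_of_same_range X Y rX rY HrX HrY). intro k.
  rewrite (rank_iff_partition X rX HrX dcX), (rank_iff_partition Y rY HrY dcY).
  split; [apply (partition_transfer G H X Y actG actH) | apply (partition_transfer H G Y X actH actG)];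
    intro S; apply Heq.
Qed.
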